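(* (a) If $\tau\in\mathcal{T}$ and the space $(\mathbb{R},\tau)$ is connected, then every interval $I\subset\mathbb{R}$ is connected in $(\mathbb{R},\tau)$. (b) If $F:\mathbb{R}\to\mathbb{R}$ is a function whose graph is a connected subspace of $\mathbb{R}^2$, then $F\cap(I\times\mathbb{R})$ is connected for every interval $I\subset\mathbb{R}$.
   Context: $\eta$ denotes the Euclidean topology on $\mathbb{R}$; $\mathcal{T}$ is the family of all topologies on $\mathbb{R}$ finer than $\eta$. A real function is identified with its graph in $\mathbb{R}^2$ with the subspace topology. *)

From HB Require Import structures.
From mathcomp Require Import all_boot all_order all_algebra.
From mathcomp Require Import all_classical all_reals all_analysis.
Set Implicit Arguments. Unset Strict Implicit. Unset Printing Implicit Defensive.
Import Order.TTheory GRing.Theory Num.Theory.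
Local Open Scope classical_set_scope.
Local Open Scope ring_scope.

Definition is_topology {R : realType} (tau : set (set R)) : Prop :=
  tau set0 /\ tau setT /\
  (forall (F : set (set R)), F `<=` tau -> tau (\bigcup_(U in F) U)) /\
  (forall U V, tau U -> tau V -> tau (U `&` V)).

Definition finer_than_euclid {R : realType} (tau : set (set R)) : Prop :=
  forall U : set R, @open R^o U -> tau U.

Definition in_calT {R : realType} (tau : set (set R)) : Prop :=
  is_topology tau /\ finer_than_euclid tau.

Definition tau_connected {R : realType} (tau : set (set R)) (A : set R) : Prop :=
  forall U V, tau U -> tau V -> A `<=` U `|` V -> A `&` U `&` V = set0 ->
    A `&` U = set0 \/ A `&` V = set0.

(* The graph of F : R -> R as a subset of R^2 (= R * R with the product,
   i.e. Euclidean, topology). *)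
Definition graph {R : realType} (F : R -> R) : set (R^o * R^o)%type :=
  [set p | p.2 = F p.1].

From HB Require Import structures.
From mathcomp Require Import all_boot all_order all_algebra.
From mathcomp Require Import all_classical all_reals all_analysis.
Set Implicit Arguments. Unset Strict Implicit. Unset Printing Implicit Defensive.
Import Order.TTheory GRing.Theory Num.Theory.
Local Open Scope classical_set_scope.
Local Open Scope ring_scope.

(* Both parts are one argument.  Let A be connected and phi : A -> R injective
   with open sublevel and superlevel sets.  If U, V split A `&` phi @^-1` I with
   a in U, b in V and phi a < phi b, then
     (U `&` [phi < phi b]) `|` [phi < phi a]  and  (V `&` [phi a < phi]) `|` [phi b < phi]
   split all of A, because the points of A with phi between phi a and phi b
   lie in phi @^-1` I, I being an interval.  For (a) take A = R and phi = id;
   for (b) take A the graph of F and phi the first projection. *)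

Definition connected_wrt {T : Type} (op : set (set T)) (A : set T) : Prop :=
  forall U V, op U -> op V -> A `<=` U `|` V -> A `&` U `&` V = set0 ->
    A `&` U = set0 \/ A `&` V = set0.

Section PreimageInterval.
Variables (R : realType) (T : Type) (op : set (set T)) (phi : T -> R).
Hypothesis opU : forall {U V}, op U -> op V -> op (U `|` V).
Hypothesis opI : forall {U V}, op U -> op V -> op (U `&` V).
Hypothesis op_lt : forall c, op (phi @^-1` [set x | x < c]).
Hypothesis op_gt : forall c, op (phi @^-1` [set x | c < x]).
Variable A : set T.
Hypothesis phi_inj : forall x y, A x -> A y -> phi x = phi y -> x = y.
Hypothesis A_conn : connected_wrt op A.
Variable I : set R.
Hypothesis I_itv : is_interval I.

Let S := A `&` phi @^-1` I.

Lemma no_ordered_split U V a b : op U -> op V ->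
  S `<=` U `|` V -> S `&` U `&` V = set0 ->
  S a -> U a -> S b -> V b -> phi a < phi b -> False.
Proof.
move=> oU oV SUV SUV0 [Aa Ia] Ua [Ab Ib] Vb ab.
have notUV z : S z -> U z -> V z -> False.
  by move=> Sz Uz Vz; have : (S `&` U `&` V) z by []; rewrite SUV0.
have S_between z : A z -> phi a <= phi z <= phi b -> S z.
  by move=> Az zab; split=> //; exact: (I_itv Ia Ib).
pose U' := (U `&` phi @^-1` [set x | x < phi b]) `|` phi @^-1` [set x | x < phi a].
pose V' := (V `&` phi @^-1` [set x | phi a < x]) `|` phi @^-1` [set x | phi b < x].
have cover : A `<=` U' `|` V'.
  move=> z Az; have [za|az] := ltP (phi z) (phi a); first by left; right.
  have [bz|zb] := ltP (phi b) (phi z); first by right; right.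
  have Sz := S_between z Az (introT andP (conj az zb)).
  case: (SUV z Sz) => [Uz|Vz].
    have [zb'|bz] := ltP (phi z) (phi b); first by left; left.
    have -> : z = b by apply: phi_inj => //; apply/eqP; rewrite eq_le zb bz.
    by right; left; split.
  have [az'|za] := ltP (phi a) (phi z); first by right; left.
  have -> : z = a by apply: phi_inj => //; apply/eqP; rewrite eq_le za az.
  by left; left; split.
have disjoint : A `&` U' `&` V' = set0.
  apply/seteqP; split=> // z [[Az [[Uz zb]|za]] [[Vz az]|bz]] /=.
  - by apply: (notUV z) => //; apply: S_between => //; rewrite !ltW.
  - by have := lt_trans zb bz; rewrite ltxx.
  - by have := lt_trans za az; rewrite ltxx.
  - by have := lt_trans (lt_trans za ab) bz; rewrite ltxx.
have oU' : op U' := opU (opI oU (op_lt _)) (op_lt _).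
have oV' : op V' := opU (opI oV (op_gt _)) (op_gt _).
have [/seteqP[+ _]|/seteqP[+ _]] := A_conn oU' oV' cover disjoint.
- by move/(_ a); apply; split=> //; left.
- by move/(_ b); apply; split=> //; left.
Qed.

Lemma connected_wrt_preimage_interval : connected_wrt op S.
Proof.
move=> U V oU oV SUV SUV0.
have [[a [Sa Ua]]|/nonemptyPn] := pselect (S `&` U !=set0); last by left.
have [[b [Sb Vb]]|/nonemptyPn] := pselect (S `&` V !=set0); last by right.
exfalso; case: (ltgtP (phi a) (phi b)) => ab.
- exact: (no_ordered_split oU oV SUV SUV0 Sa Ua Sb Vb).
- apply: (no_ordered_split oV oU _ _ Sb Vb Sa Ua ab) => //.
    by rewrite setUC.
  by rewrite setIAC.
- have ba : a = b by case: Sa Sb => Aa _ [Ab _]; exact: phi_inj.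
  by subst b; have : (S `&` U `&` V) a by []; rewrite SUV0.
Qed.

End PreimageInterval.

Lemma connected_openP (T : topologicalType) (A : set T) :
  connected A <-> connected_wrt open A.
Proof.
split=> [cA U V oU oV AUV AUV0|cA B [q Bq] [C oC BC] [D cD BD]].
  have [[u [Au Uu]]|/nonemptyPn] := pselect (A `&` U !=set0); last by left.
  have [[v [Av Vv]]|/nonemptyPn] := pselect (A `&` V !=set0); last by right.
  have notUV z : A z -> U z -> V z -> False.
    by move=> Az Uz Vz; have : (A `&` U `&` V) z by []; rewrite AUV0.
  have AU : A `&` U = A.
    apply: cA; [by exists u | by exists U |].
    exists (~` V); first exact: open_closedC.
    apply/seteqP; split=> x [Ax Hx]; split=> //; first exact: notUV.
    by case: (AUV x Ax).
  have [_ Uv] : (A `&` U) v by rewrite AU.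
  by case: (notUV v).
have cover : A `<=` C `|` ~` D.
  move=> z Az; have [Dz|] := pselect (D z); last by right.
  have : B z by rewrite BD.
  by rewrite BC => -[]; left.
have disjoint : A `&` C `&` ~` D = set0.
  apply/seteqP; split=> // z [[Az Cz] nDz].
  have : B z by rewrite BC.
  by rewrite BD => -[].
have [AC0|AnD0] := cA C (~` D) oC (closed_openC cD) cover disjoint.
  by move: Bq; rewrite BC AC0.
rewrite BD; apply/seteqP; split=> [z []//|z Az].
by split=> //; apply: contrapT => nDz; have : (A `&` ~` D) z by []; rewrite AnD0.
Qed.

Lemma is_topology_setU (R : realType) (tau : set (set R)) :
  is_topology tau -> forall U V, tau U -> tau V -> tau (U `|` V).
Proof.
move=> [_ [_ [tau_bigcup _]]] U V tU tV.
have -> : U `|` V = \bigcup_(W in [set U; V]) W.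
  apply/seteqP; split=> [x [Ux|Vx]|x [W [->|->] Wx]].
  - by exists U => //; left.
  - by exists V => //; right.
  - by left.
  - by right.
by apply: tau_bigcup => W [->|->].
Qed.

Lemma open_preimage_fst (T U : topologicalType) (W : set T) :
  open W -> open (@fst T U @^-1` W).
Proof. by move=> oW; apply: open_comp => // x _; exact: cvg_fst. Qed.

Lemma graph_fst_inj (R : realType) (F : R -> R) (p q : R^o * R^o) :
  graph F p -> graph F q -> p.1 = q.1 -> p = q.
Proof. by case: p q => [x y] [x' y']; rewrite /graph /= => -> -> ->. Qed.

Theorem lemma5 (R : realType) :
  (forall tau : set (set R), in_calT tau -> tau_connected tau setT ->
     forall I : set R, is_interval I -> tau_connected tau I) /\
  (forall F : R -> R, connected (graph F) ->
     forall I : set R, is_interval I ->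
       connected (graph F `&` [set p | I p.1])).
Proof.
split.
- move=> tau [top fin] cT I iI.
  have tauI U V : tau U -> tau V -> tau (U `&` V) by case: top => [_ [_ [_]]]; apply.
  have := connected_wrt_preimage_interval (is_topology_setU top) tauI
    (fun c => fin _ (@open_lt R c)) (fun c => fin _ (@open_gt R c))
    (fun x y _ _ => id) cT iI.
  by rewrite setTI.
- move=> F /connected_openP cG I iI; apply/connected_openP.
  exact: (connected_wrt_preimage_interval (@openU _) (@openI _)
    (fun c => open_preimage_fst (@open_lt R c))
    (fun c => open_preimage_fst (@open_gt R c))
    (@graph_fst_inj R F) cG iI).
Qed.
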